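(* Consider a ring road of length $L>0$ whose traffic is described by the LWR model with triangular fundamental diagram $Q(k)=\min\{Vk,(K-k)W\}$ ($V,W,K>0$), capacity $C=V\bar K$ with $\bar K=\frac{W}{V+W}K$, constant initial density $k_0\in[0,K]$, and a pretimed signal at $x=0$ (identified with $x=L$) with cycle length $T>0$ and effective green ratio $\pi\in(0,1)$, so that $\beta(t)=1$ if $t-iT\in[0,\pi T]$ for some integer $i\ge 0$ and $\beta(t)=0$ otherwise. Let $G(t)$ be the boundary flow given by the continuous link transmission model described in the context. Then at a large time $t$, $G$ is determined by $$G(t)=\min\Big\{G\big(t-\tfrac LV\big)+k_0L,\; G\big(t-\tfrac LW\big)+(K-k_0)L,\; G(iT)+(t-iT)C\Big\}$$ for $t-iT\in(0,\pi T]$ (effective green intervals), and $$G(t)=G((i+\pi)T)$$ for $t-iT\in(\pi T,T]$ (effective red intervals).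
   Context: Continuous link transmission model (LTM) for the signalized ring road: $G(t)$ is the cumulative number of vehicles that have passed the signal location $x=0$ by time $t$, with $G(0)=0$, and $g(t)=G'(t)$. Let $H(z)=0$ if $z=0$ and $H(z)=+\infty$ if $z>0$. The demand is $d(t)=\min\{k_0V+H(\lambda(t)),C\}$ for $t\le L/V$ and $d(t)=\min\{g(t-L/V)+H(\lambda(t)),C\}$ for $t>L/V$, where the queue size is $\lambda(t)=k_0Vt-G(t)$ for $t\le L/V$ and $\lambda(t)=G(t-L/V)-G(t)+k_0L$ for $t>L/V$. The supply is $s(t)=\min\{(K-k_0)W+H(\gamma(t)),C\}$ for $t\le L/W$ and $s(t)=\min\{g(t-L/W)+H(\gamma(t)),C\}$ for $t>L/W$, where the vacancy size is $\gamma(t)=(K-k_0)Wt-G(t)$ for $t\le L/W$ and $\gamma(t)=G(t-L/W)-G(t)+(K-k_0)L$ for $t>L/W$. The boundary flow-rate is $g(t)=\beta(t)\min\{d(t),s(t)\}$. (The discrete version with step $\Delta t$ replaces $H(z)\Delta t$ by $z$: $G(t+\Delta t)=G(t)+\beta(t)\min\{d(t)\Delta t,s(t)\Delta t\}$ with $d(t)\Delta t=\min\{G(t+\Delta t-L/V)+k_0L-G(t),C\Delta t\}$ and $s(t)\Delta t=\min\{G(t+\Delta t-L/W)+(K-k_0)L-G(t),C\Delta t\}$ for large $t$.) *)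

From Stdlib Require Import Reals.
From Coquelicot Require Import Coquelicot.
Open Scope R_scope.

Definition capacity (V W K : R) : R := V * (W / (V + W) * K).

Definition green (T p t : R) : Prop :=
  exists i : nat, 0 <= t - INR i * T <= p * T.

Definition queue (L V k0 : R) (G : R -> R) (t : R) : R :=
  if Rle_dec t (L / V) then k0 * V * t - G t else G (t - L / V) - G t + k0 * L.

Definition vacancy (L W K k0 : R) (G : R -> R) (t : R) : R :=
  if Rle_dec t (L / W) then (K - k0) * W * t - G t
  else G (t - L / W) - G t + (K - k0) * L.

(* Demand d(t) = min{ k0 V + H(lambda), C } (resp. g(t-L/V) + H(lambda)),
   with H(z) = 0 if z = 0 and +oo if z > 0: so d = C whenever lambda > 0. *)
Definition demand (L V W K k0 : R) (G g : R -> R) (t : R) : R :=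
  if Rlt_dec 0 (queue L V k0 G t) then capacity V W K
  else if Rle_dec t (L / V) then Rmin (k0 * V) (capacity V W K)
  else Rmin (g (t - L / V)) (capacity V W K).

(* Supply s(t), analogously with H(gamma). *)
Definition supply (L V W K k0 : R) (G g : R -> R) (t : R) : R :=
  if Rlt_dec 0 (vacancy L W K k0 G t) then capacity V W K
  else if Rle_dec t (L / W) then Rmin ((K - k0) * W) (capacity V W K)
  else Rmin (g (t - L / W)) (capacity V W K).

Definition LTM_solution (L V W K k0 T p : R) (G g : R -> R) : Prop :=
  (forall t, 0 <= t -> is_RInt g 0 t (G t)) /\
  (forall t, 0 <= t ->
     (green T p t -> g t = Rmin (demand L V W K k0 G g t) (supply L V W K k0 G g t)) /\
     (~ green T p t -> g t = 0)).

From Stdlib Require Import Reals Lra Classical.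
From Coquelicot Require Import Coquelicot.
Open Scope R_scope.

(* The queue lambda at the signal and the vacancy gamma behind it are integrals of arrival
   minus departure rates, hence Lipschitz, and the LTM rule lets an empty queue release no
   more than it receives, so neither becomes negative.  In a green phase, either both stay
   positive and the flow runs at capacity, which yields the third term of the minimum, or one
   of them is zero at a last instant c; from c on the flow runs at capacity, so that queue
   cannot grow and is still zero at t, which yields the first or second term because
   G (t - L/V) + k0 L = G t + lambda t and G (t - L/W) + (K - k0) L = G t + gamma t.
   In a red phase the flow is zero. *)

Lemma is_RInt_le_const (f : R -> R) (a b I M : R) :
  a <= b -> is_RInt f a b I -> (forall x, a < x < b -> f x <= M) -> I <= M * (b - a).
Proof.
  intros hab hI hM.
  rewrite Rmult_comm.
  exact (is_RInt_le f (fun _ => M) a b I _ hab hI (is_RInt_const a b M) hM).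
Qed.

Lemma is_RInt_ge_const (f : R -> R) (a b I M : R) :
  a <= b -> is_RInt f a b I -> (forall x, a < x < b -> M <= f x) -> M * (b - a) <= I.
Proof.
  intros hab hI hM.
  rewrite Rmult_comm.
  exact (is_RInt_le (fun _ => M) f a b _ I hab (is_RInt_const a b M) hI hM).
Qed.

Lemma is_RInt_const_on (f : R -> R) (a b I c : R) :
  a <= b -> is_RInt f a b I -> (forall x, a < x < b -> f x = c) -> I = c * (b - a).
Proof.
  intros hab hI hc.
  apply Rle_antisym.
  - apply (is_RInt_le_const f a b); [exact hab | exact hI |].
    intros x hx; rewrite hc by exact hx; apply Rle_refl.
  - apply (is_RInt_ge_const f a b); [exact hab | exact hI |].
    intros x hx; rewrite hc by exact hx; apply Rle_refl.
Qed.

Lemma is_RInt_sub_primitive (f F : R -> R) (x y : R) :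
  (forall t, 0 <= t -> is_RInt f 0 t (F t)) -> 0 <= x -> 0 <= y ->
  is_RInt f x y (F y - F x).
Proof.
  intros HF hx hy.
  replace (F y - F x) with (plus (opp (F x)) (F y)) by (cbn; ring).
  exact (is_RInt_Chasles f x 0 y _ _ (is_RInt_swap _ _ _ _ (HF x hx)) (HF y hy)).
Qed.

Lemma is_RInt_primitive_0 (f F : R -> R) : is_RInt f 0 0 (F 0) -> F 0 = 0.
Proof.
  intros H. rewrite <- (is_RInt_unique f 0 0 _ H).
  exact (is_RInt_unique f 0 0 _ (is_RInt_point f 0)).
Qed.

Lemma delay_induction (d : R) (P : R -> Prop) : 0 < d ->
  (forall t, 0 <= t -> (forall s, 0 <= s <= t - d -> P s) -> P t) ->
  forall t, 0 <= t -> P t.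
Proof.
  intros hd step.
  assert (Hn : forall (n : nat) t, 0 <= t <= INR n * d -> P t).
  { induction n as [|n IH]; intros t ht; apply step; try lra; intros s hs.
    - simpl in ht; lra.
    - apply IH. rewrite S_INR in ht. lra. }
  intros t ht.
  destruct (nfloor_ex (t / d)) as [n hn]; [apply Rdiv_le_0_compat; lra |].
  apply (Hn (S n)). rewrite S_INR.
  assert (t = t / d * d) by (field; lra).
  nra.
Qed.

Definition lipschitz_on (a b M : R) (f : R -> R) : Prop :=
  forall x y, a <= x <= b -> a <= y <= b -> Rabs (f y - f x) <= M * Rabs (y - x).

Lemma lipschitz_on_opp (a b M : R) (f : R -> R) :
  lipschitz_on a b M f -> lipschitz_on a b M (fun x => - f x).
Proof.
  intros Hf x y hx hy.
  replace (- f y - - f x) with (- (f y - f x)) by ring.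
  rewrite Rabs_Ropp. exact (Hf x y hx hy).
Qed.

Lemma lipschitz_on_Rmin (a b M N : R) (f h : R -> R) :
  lipschitz_on a b M f -> lipschitz_on a b N h ->
  lipschitz_on a b (M + N) (fun x => Rmin (f x) (h x)).
Proof.
  intros Hf Hh x y hx hy.
  assert (Hmin : forall u v w z, Rabs (Rmin u v - Rmin w z) <= Rabs (u - w) + Rabs (v - z)).
  { intros u v w z. unfold Rmin.
    destruct (Rle_dec u v), (Rle_dec w z); unfold Rabs; repeat destruct Rcase_abs; lra. }
  specialize (Hf x y hx hy). specialize (Hh x y hx hy).
  eapply Rle_trans; [apply Hmin | lra].
Qed.

Lemma last_nonpos_point (a b M : R) (f : R -> R) :
  a <= b -> 0 <= M -> f a <= 0 -> lipschitz_on a b M f ->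
  exists c, a <= c <= b /\ f c <= 0 /\ forall s, c < s <= b -> 0 < f s.
Proof.
  intros hab hM hfa Hf.
  set (E := fun x => a <= x <= b /\ f x <= 0).
  assert (hbound : bound E) by (exists b; intros x [hx _]; lra).
  assert (hne : exists x, E x) by (exists a; split; lra).
  destruct (completeness E hbound hne) as [c [Hub Hlub]].
  assert (hac : a <= c) by (apply Hub; split; lra).
  assert (hcb : c <= b) by (apply Hlub; intros x [hx _]; lra).
  exists c; split; [lra | split].
  - destruct (Rle_lt_dec (f c) 0) as [h | h]; [exact h | exfalso].
    assert (hca : a < c) by (destruct (Req_dec a c); [subst; lra | lra]).
    set (d := Rmin (f c / (M + 1)) (c - a)).
    assert (hd : 0 < d).
    { apply Rmin_glb_lt; [apply Rdiv_lt_0_compat |]; lra. }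
    assert (hd1 : d * (M + 1) <= f c).
    { assert (d <= f c / (M + 1)) by apply Rmin_l.
      replace (f c) with (f c / (M + 1) * (M + 1)) by (field; lra).
      apply Rmult_le_compat_r; lra. }
    assert (c <= c - d); [| lra].
    apply Hlub. intros x [hx hfx].
    destruct (Rle_lt_dec x (c - d)) as [h1 | h1]; [exact h1 | exfalso].
    assert (hxc : x <= c) by (apply Hub; split; assumption).
    specialize (Hf x c hx (conj hac hcb)).
    rewrite Rabs_right in Hf by lra.
    rewrite (Rabs_right (c - x)) in Hf by lra.
    nra.
  - intros s hs. destruct (Rle_lt_dec (f s) 0) as [h | h]; [| exact h].
    exfalso. assert (s <= c) by (apply Hub; split; [lra | exact h]). lra.
Qed.

(* Arrival rate at the signal of the wave travelling at speed [Vx]: the initial platoon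
   ([kx * Vx]) until it has gone round the ring, then the flow that passed the signal one
   lap earlier.  With [Vx, kx := W, K - k0] this describes the vacancies, and
   [vacancy L W K k0 G] is convertibly [queue L W (K - k0) G]. *)
Definition arrival_rate (L Vx kx : R) (g : R -> R) (u : R) : R :=
  if Rle_dec u (L / Vx) then kx * Vx else g (u - L / Vx).

Section Queue.

Variables (L Vx kx Cap : R) (G g : R -> R).
Hypotheses (hL : 0 < L) (hVx : 0 < Vx) (hkx : 0 <= kx)
  (HG : forall t, 0 <= t -> is_RInt g 0 t (G t))
  (Hg : forall t, 0 <= t -> 0 <= g t <= Cap).

Let delay_pos : 0 < L / Vx.
Proof. apply Rdiv_lt_0_compat; assumption. Qed.

Lemma queue_late (t : R) : L / Vx <= t -> queue L Vx kx G t = G (t - L / Vx) - G t + kx * L.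
Proof.
  intros ht. unfold queue. destruct Rle_dec as [h |]; [| reflexivity].
  replace t with (L / Vx) by lra. rewrite Rminus_diag.
  rewrite (is_RInt_primitive_0 g G (HG 0 (Rle_refl 0))). field. lra.
Qed.

Lemma queue_is_RInt (t : R) : 0 <= t ->
  is_RInt (fun u => arrival_rate L Vx kx g u - g u) 0 t (queue L Vx kx G t).
Proof.
  intros ht.
  assert (Hconst : forall b, b <= L / Vx ->
            is_RInt (arrival_rate L Vx kx g) 0 b (kx * Vx * (b - 0))).
  { intros b hb. rewrite Rmult_comm.
    pose proof (is_RInt_const 0 b (kx * Vx)) as Hc.
    change (scal (b - 0) (kx * Vx)) with ((b - 0) * (kx * Vx)) in Hc.
    apply (is_RInt_ext (fun _ => kx * Vx)); [| exact Hc].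
    intros u hu. unfold arrival_rate. destruct Rle_dec as [| h]; [reflexivity |].
    exfalso; apply h. pose proof (Rmax_lub 0 b (L / Vx)). lra. }
  assert (Harr : is_RInt (arrival_rate L Vx kx g) 0 t (queue L Vx kx G t + G t)).
  { destruct (Rle_dec t (L / Vx)) as [h | h].
    - replace (queue L Vx kx G t + G t) with (kx * Vx * (t - 0))
        by (unfold queue; destruct Rle_dec; [ring | contradiction]).
      exact (Hconst t h).
    - rewrite queue_late by lra.
      replace (G (t - L / Vx) - G t + kx * L + G t)
        with (kx * Vx * (L / Vx - 0) + G (t - L / Vx)) by (field; lra).
      change (kx * Vx * (L / Vx - 0) + G (t - L / Vx))
        with (plus (kx * Vx * (L / Vx - 0)) (G (t - L / Vx))).
      apply (is_RInt_Chasles (V := R_NormedModule) _ 0 (L / Vx) t);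
        [exact (Hconst _ (Rle_refl _)) |].
      assert (Hshift : is_RInt (fun u => scal 1 (g (1 * u + - (L / Vx)))) (L / Vx) t
                         (G (t - L / Vx))).
      { apply (is_RInt_comp_lin g 1 (- (L / Vx)) (L / Vx) t).
        replace (1 * (L / Vx) + - (L / Vx)) with 0 by ring.
        replace (1 * t + - (L / Vx)) with (t - L / Vx) by ring.
        apply HG; lra. }
      apply (is_RInt_ext (fun u => scal 1 (g (1 * u + - (L / Vx))))); [| exact Hshift].
      intros u hu. rewrite Rmin_left, Rmax_right in hu by lra.
      unfold arrival_rate. destruct Rle_dec; [lra |].
      change (scal 1 (g (1 * u + - (L / Vx)))) with (1 * g (1 * u + - (L / Vx))).
      rewrite Rmult_1_l. f_equal; ring. }
  pose proof (is_RInt_minus _ _ _ _ _ _ Harr (HG t ht)) as Hdiff.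
  change (minus (queue L Vx kx G t + G t) (G t)) with (queue L Vx kx G t + G t - G t) in Hdiff.
  replace (queue L Vx kx G t) with (queue L Vx kx G t + G t - G t) by ring.
  exact Hdiff.
Qed.

Lemma queue_sub_is_RInt (x y : R) : 0 <= x -> 0 <= y ->
  is_RInt (fun u => arrival_rate L Vx kx g u - g u) x y
    (queue L Vx kx G y - queue L Vx kx G x).
Proof. apply is_RInt_sub_primitive, queue_is_RInt. Qed.

Lemma arrival_rate_bounds (u : R) : 0 <= u -> 0 <= arrival_rate L Vx kx g u <= kx * Vx + Cap.
Proof.
  intros hu.
  assert (hkV : 0 <= kx * Vx) by (apply Rmult_le_pos; lra).
  assert (hCap : 0 <= Cap) by (destruct (Hg 0 (Rle_refl 0)); lra).
  unfold arrival_rate. destruct Rle_dec as [| h]; [lra |].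
  destruct (Hg (u - L / Vx)); lra.
Qed.

Lemma queue_lipschitz (a b : R) : 0 <= a ->
  lipschitz_on a b (kx * Vx + Cap) (queue L Vx kx G).
Proof.
  intros ha x y hx hy.
  rewrite Rmult_comm.
  change (Rabs (queue L Vx kx G y - queue L Vx kx G x))
    with (norm (queue L Vx kx G y - queue L Vx kx G x)).
  apply (norm_RInt_le_const_abs (fun u => arrival_rate L Vx kx g u - g u) x y);
    [| apply queue_sub_is_RInt; lra].
  intros u hu.
  assert (hu0 : 0 <= u) by (pose proof (Rmin_glb x y 0); pose proof (Rmin_l x y); lra).
  destruct (arrival_rate_bounds u hu0), (Hg u hu0).
  change (norm (arrival_rate L Vx kx g u - g u)) with (Rabs (arrival_rate L Vx kx g u - g u)).
  assert (0 <= kx * Vx) by (apply Rmult_le_pos; lra).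
  apply Rabs_le. lra.
Qed.

Lemma queue_nondecreasing (x y : R) : 0 <= x <= y ->
  (forall u, x < u < y -> g u <= arrival_rate L Vx kx g u) ->
  queue L Vx kx G x <= queue L Vx kx G y.
Proof.
  intros hxy Hu.
  assert (0 * (y - x) <= queue L Vx kx G y - queue L Vx kx G x); [| lra].
  apply (is_RInt_ge_const (fun u => arrival_rate L Vx kx g u - g u) x y); [lra | |].
  - apply queue_sub_is_RInt; lra.
  - intros u hu. specialize (Hu u hu). lra.
Qed.

Lemma queue_nonincreasing_at_capacity (x y : R) : L / Vx <= x <= y ->
  (forall u, x < u < y -> g u = Cap) ->
  queue L Vx kx G y <= queue L Vx kx G x.
Proof.
  intros hxy Hu.
  assert (queue L Vx kx G y - queue L Vx kx G x <= 0 * (y - x)); [| lra].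
  apply (is_RInt_le_const (fun u => arrival_rate L Vx kx g u - g u) x y); [lra | |].
  - apply queue_sub_is_RInt; lra.
  - intros u hu. rewrite Hu by exact hu.
    unfold arrival_rate. destruct Rle_dec; [lra |].
    destruct (Hg (u - L / Vx)); lra.
Qed.

Lemma queue_nonneg :
  (forall u, 0 <= u -> queue L Vx kx G u <= 0 -> g u <= arrival_rate L Vx kx g u) ->
  forall t, 0 <= t -> 0 <= queue L Vx kx G t.
Proof.
  intros Hout t ht.
  destruct (Rle_lt_dec 0 (queue L Vx kx G t)) as [h | h]; [exact h | exfalso].
  assert (hM : 0 <= kx * Vx + Cap)
    by (destruct (arrival_rate_bounds 0 (Rle_refl 0)); lra).
  assert (hq0 : - queue L Vx kx G 0 <= 0).
  { unfold queue. destruct Rle_dec; [| lra].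
    rewrite (is_RInt_primitive_0 g G (HG 0 (Rle_refl 0))). lra. }
  destruct (last_nonpos_point 0 t _ (fun u => - queue L Vx kx G u) ht hM hq0
              (lipschitz_on_opp _ _ _ _ (queue_lipschitz 0 t (Rle_refl 0))))
    as [c [hc [hfc Hafter]]].
  assert (hct : c < t) by (destruct (Req_dec c t); [subst; lra | lra]).
  assert (queue L Vx kx G c <= queue L Vx kx G t); [| lra].
  apply queue_nondecreasing; [lra |].
  intros u hu. apply Hout; [lra |]. specialize (Hafter u ltac:(lra)). cbn in Hafter. lra.
Qed.

End Queue.

Lemma capacity_pos (V W K : R) : 0 < V -> 0 < W -> 0 < K -> 0 < capacity V W K.
Proof.
  intros hV hW hK. unfold capacity.
  apply Rmult_lt_0_compat; [lra |].
  apply Rmult_lt_0_compat; [apply Rdiv_lt_0_compat |]; lra.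
Qed.

Section DemandSupply.

Variables (L V W K k0 : R) (G g : R -> R) (t : R).

Lemma demand_le_capacity : demand L V W K k0 G g t <= capacity V W K.
Proof.
  unfold demand. destruct Rlt_dec; [lra |]. destruct Rle_dec; apply Rmin_r.
Qed.

Lemma supply_le_capacity : supply L V W K k0 G g t <= capacity V W K.
Proof.
  unfold supply. destruct Rlt_dec; [lra |]. destruct Rle_dec; apply Rmin_r.
Qed.

Lemma demand_le_arrival :
  queue L V k0 G t <= 0 -> demand L V W K k0 G g t <= arrival_rate L V k0 g t.
Proof.
  intros hq. unfold demand, arrival_rate.
  destruct Rlt_dec; [lra |]. destruct Rle_dec; apply Rmin_l.
Qed.

Lemma supply_le_arrival :
  vacancy L W K k0 G t <= 0 -> supply L V W K k0 G g t <= arrival_rate L W (K - k0) g t.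
Proof.
  intros hq. unfold supply, arrival_rate.
  destruct Rlt_dec; [lra |]. destruct Rle_dec; apply Rmin_l.
Qed.

Lemma demand_queue_pos :
  0 < queue L V k0 G t -> demand L V W K k0 G g t = capacity V W K.
Proof. intros hq. unfold demand. destruct Rlt_dec; [reflexivity | contradiction]. Qed.

Lemma supply_vacancy_pos :
  0 < vacancy L W K k0 G t -> supply L V W K k0 G g t = capacity V W K.
Proof. intros hq. unfold supply. destruct Rlt_dec; [reflexivity | contradiction]. Qed.

Lemma demand_nonneg : 0 <= k0 * V -> 0 <= capacity V W K ->
  (L / V < t -> 0 <= g (t - L / V)) -> 0 <= demand L V W K k0 G g t.
Proof.
  intros hk hC hg. unfold demand.
  destruct Rlt_dec; [exact hC |].
  destruct Rle_dec; apply Rmin_glb; try assumption. apply hg; lra.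
Qed.

Lemma supply_nonneg : 0 <= (K - k0) * W -> 0 <= capacity V W K ->
  (L / W < t -> 0 <= g (t - L / W)) -> 0 <= supply L V W K k0 G g t.
Proof.
  intros hk hC hg. unfold supply.
  destruct Rlt_dec; [exact hC |].
  destruct Rle_dec; apply Rmin_glb; try assumption. apply hg; lra.
Qed.

End DemandSupply.

Lemma not_green_in_red (T p : R) (i : nat) (u : R) : 0 < T ->
  (INR i + p) * T < u < (INR i + 1) * T -> ~ green T p u.
Proof.
  intros hT hu [j hj].
  destruct (Nat.le_gt_cases j i) as [hji | hji].
  - apply le_INR in hji.
    assert (INR j * T <= INR i * T) by (apply Rmult_le_compat_r; lra). lra.
  - apply le_INR in hji. rewrite S_INR in hji.
    assert ((INR i + 1) * T <= INR j * T) by (apply Rmult_le_compat_r; lra). lra.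
Qed.

Section LTM.

Variables (L V W K k0 T p : R) (G g : R -> R).
Hypotheses (hL : 0 < L) (hV : 0 < V) (hW : 0 < W) (hK : 0 < K) (hk0 : 0 <= k0 <= K)
  (HG : forall t, 0 <= t -> is_RInt g 0 t (G t))
  (Hg : forall t, 0 <= t ->
     (green T p t -> g t = Rmin (demand L V W K k0 G g t) (supply L V W K k0 G g t)) /\
     (~ green T p t -> g t = 0)).

Let capacity_nonneg : 0 <= capacity V W K.
Proof. apply Rlt_le, capacity_pos; assumption. Qed.

Lemma LTM_flow_nonneg (t : R) : 0 <= t -> 0 <= g t.
Proof.
  assert (hd : 0 < Rmin (L / V) (L / W))
    by (apply Rmin_glb_lt; apply Rdiv_lt_0_compat; assumption).
  pose proof (Rmin_l (L / V) (L / W)). pose proof (Rmin_r (L / V) (L / W)).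
  revert t. apply (delay_induction _ _ hd). intros t ht IH.
  destruct (Hg t ht) as [Hgreen Hred].
  destruct (classic (green T p t)) as [hgr | hgr]; [rewrite (Hgreen hgr) | rewrite (Hred hgr); lra].
  apply Rmin_glb.
  - apply demand_nonneg; [apply Rmult_le_pos; lra | exact capacity_nonneg |].
    intros; apply IH; lra.
  - apply supply_nonneg; [apply Rmult_le_pos; lra | exact capacity_nonneg |].
    intros; apply IH; lra.
Qed.

Lemma LTM_flow_le_demand_supply (t : R) : 0 <= t ->
  g t <= Rmin (demand L V W K k0 G g t) (supply L V W K k0 G g t).
Proof.
  intros ht. destruct (Hg t ht) as [Hgreen Hred].
  destruct (classic (green T p t)) as [hgr | hgr]; [rewrite (Hgreen hgr); lra |].
  rewrite (Hred hgr).
  apply Rmin_glb.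
  - apply demand_nonneg; [apply Rmult_le_pos; lra | exact capacity_nonneg |].
    intros; apply LTM_flow_nonneg; lra.
  - apply supply_nonneg; [apply Rmult_le_pos; lra | exact capacity_nonneg |].
    intros; apply LTM_flow_nonneg; lra.
Qed.

Lemma LTM_flow_bounds (t : R) : 0 <= t -> 0 <= g t <= capacity V W K.
Proof.
  intros ht. split; [exact (LTM_flow_nonneg t ht) |].
  eapply Rle_trans; [exact (LTM_flow_le_demand_supply t ht) |].
  eapply Rle_trans; [apply Rmin_l | apply demand_le_capacity].
Qed.

Lemma LTM_queue_nonneg (t : R) : 0 <= t -> 0 <= queue L V k0 G t.
Proof.
  apply (queue_nonneg L V k0 (capacity V W K) G g hL hV ltac:(lra) HG LTM_flow_bounds).
  intros u hu hq.
  eapply Rle_trans; [exact (LTM_flow_le_demand_supply u hu) |].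
  eapply Rle_trans; [apply Rmin_l | exact (demand_le_arrival L V W K k0 G g u hq)].
Qed.

Lemma LTM_vacancy_nonneg (t : R) : 0 <= t -> 0 <= vacancy L W K k0 G t.
Proof.
  apply (queue_nonneg L W (K - k0) (capacity V W K) G g hL hW ltac:(lra) HG LTM_flow_bounds).
  intros u hu hq.
  eapply Rle_trans; [exact (LTM_flow_le_demand_supply u hu) |].
  eapply Rle_trans; [apply Rmin_r | exact (supply_le_arrival L V W K k0 G g u hq)].
Qed.

Lemma LTM_flow_at_capacity (t : R) : 0 <= t -> green T p t ->
  0 < queue L V k0 G t -> 0 < vacancy L W K k0 G t -> g t = capacity V W K.
Proof.
  intros ht hgr hq hv.
  rewrite (proj1 (Hg t ht) hgr), demand_queue_pos, supply_vacancy_pos by assumption.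
  apply Rmin_left, Rle_refl.
Qed.

(* After the last instant of [[s, t]] at which a queue is empty the flow runs at capacity,
   which cannot make that queue grow. *)
Lemma LTM_green_gap (s t : R) : L / V <= s -> L / W <= s -> s <= t ->
  (forall u, s <= u <= t -> green T p u) ->
  queue L V k0 G t = 0 \/ vacancy L W K k0 G t = 0 \/
  G t = G s + (t - s) * capacity V W K.
Proof.
  intros hsV hsW hst Hgreen.
  assert (hs : 0 <= s) by (pose proof (Rdiv_lt_0_compat L V hL hV); lra).
  set (m := fun u => Rmin (queue L V k0 G u) (vacancy L W K k0 G u)).
  assert (Hcap : forall a, s <= a -> (forall v, a < v < t -> 0 < m v) ->
                 forall v, a < v < t -> g v = capacity V W K).
  { intros a ha Hpos v hv. destruct (Rmin_Rgt_l _ _ _ (Hpos v hv)).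
    apply LTM_flow_at_capacity; [lra | apply Hgreen; lra | lra | lra]. }
  destruct (classic (exists u, s <= u <= t /\ m u <= 0)) as [[u [hu hmu]] | hnone].
  - assert (hM : 0 <= (k0 * V + capacity V W K) + ((K - k0) * W + capacity V W K)).
    { pose proof capacity_nonneg.
      assert (0 <= k0 * V) by (apply Rmult_le_pos; lra).
      assert (0 <= (K - k0) * W) by (apply Rmult_le_pos; lra). lra. }
    destruct (last_nonpos_point u t _ m ltac:(lra) hM hmu
      (lipschitz_on_Rmin _ _ _ _ _ _
         (queue_lipschitz L V k0 _ G g hL hV ltac:(lra) HG LTM_flow_bounds u t ltac:(lra))
         (queue_lipschitz L W (K - k0) _ G g hL hW ltac:(lra) HG LTM_flow_bounds u t ltac:(lra))))
      as [c [hc [hmc Hafter]]].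
    pose proof (Hcap c ltac:(lra) (fun v hv => Hafter v ltac:(lra))) as Hflow.
    pose proof (queue_nonincreasing_at_capacity L V k0 _ G g hL hV HG LTM_flow_bounds c t
                  ltac:(lra) Hflow).
    pose proof (queue_nonincreasing_at_capacity L W (K - k0) _ G g hL hW HG LTM_flow_bounds c t
                  ltac:(lra) Hflow).
    pose proof (LTM_queue_nonneg t ltac:(lra)). pose proof (LTM_vacancy_nonneg t ltac:(lra)).
    pose proof (LTM_queue_nonneg c ltac:(lra)). pose proof (LTM_vacancy_nonneg c ltac:(lra)).
    unfold m, Rmin in hmc. destruct Rle_dec in hmc; [left | right; left];
      change (vacancy L W K k0 G) with (queue L W (K - k0) G) in *; lra.
  - right; right.
    assert (Hflow : forall v, s < v < t -> g v = capacity V W K).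
    { apply (Hcap s (Rle_refl s)). intros v hv.
      destruct (Rlt_or_le 0 (m v)) as [hmv | hmv]; [exact hmv |].
      exfalso; apply hnone; exists v; split; [lra | exact hmv]. }
    pose proof (is_RInt_const_on g s t _ _ hst
                  (is_RInt_sub_primitive g G s t HG hs ltac:(lra)) Hflow).
    lra.
Qed.

Lemma LTM_green_phase (s t : R) : L / V <= s -> L / W <= s -> s <= t ->
  (forall u, s <= u <= t -> green T p u) ->
  G t = Rmin (Rmin (G (t - L / V) + k0 * L) (G (t - L / W) + (K - k0) * L))
             (G s + (t - s) * capacity V W K).
Proof.
  intros hsV hsW hst Hgreen.
  assert (hs : 0 <= s) by (pose proof (Rdiv_lt_0_compat L V hL hV); lra).
  pose proof (queue_late L V k0 G g hV HG t ltac:(lra)) as eV.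
  pose proof (queue_late L W (K - k0) G g hW HG t ltac:(lra)) as eW.
  change (queue L W (K - k0) G t) with (vacancy L W K k0 G t) in eW.
  pose proof (LTM_queue_nonneg t ltac:(lra)). pose proof (LTM_vacancy_nonneg t ltac:(lra)).
  assert (G t <= G s + (t - s) * capacity V W K).
  { pose proof (is_RInt_le_const g s t _ (capacity V W K) hst
                  (is_RInt_sub_primitive g G s t HG hs ltac:(lra))
                  (fun v hv => proj2 (LTM_flow_bounds v ltac:(lra)))). lra. }
  destruct (LTM_green_gap s t hsV hsW hst Hgreen) as [h | [h | h]];
    unfold Rmin; repeat destruct Rle_dec; lra.
Qed.

Lemma LTM_red_phase (a t : R) : 0 <= a <= t -> (forall u, a < u < t -> ~ green T p u) ->
  G t = G a.
Proof.
  intros hat Hred.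
  assert (Hzero : forall u, a < u < t -> g u = 0) by (intros u hu; apply Hg; [lra | auto]).
  pose proof (is_RInt_const_on g a t _ _ ltac:(lra)
                (is_RInt_sub_primitive g G a t HG ltac:(lra) ltac:(lra)) Hzero).
  lra.
Qed.

End LTM.

Theorem theorem2p1 (L V W K k0 T p : R) (G g : R -> R) :
  0 < L -> 0 < V -> 0 < W -> 0 < K -> 0 <= k0 <= K -> 0 < T -> 0 < p < 1 ->
  LTM_solution L V W K k0 T p G g ->
  exists t0 : R, forall t : R, t0 <= t -> forall i : nat,
    (0 < t - INR i * T <= p * T ->
       G t = Rmin (Rmin (G (t - L / V) + k0 * L) (G (t - L / W) + (K - k0) * L))
                  (G (INR i * T) + (t - INR i * T) * capacity V W K)) /\
    (p * T < t - INR i * T <= T ->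
       G t = G ((INR i + p) * T)).
Proof.
  intros hL hV hW hK hk0 hT hp [HG Hg].
  assert (hpT : p * T < T) by nra.
  pose proof (Rdiv_lt_0_compat L V hL hV). pose proof (Rdiv_lt_0_compat L W hL hW).
  exists (L / V + L / W + T). intros t ht i. split.
  - intros hi.
    apply (LTM_green_phase L V W K k0 T p G g hL hV hW hK hk0 HG Hg); try lra.
    intros u hu. exists i. lra.
  - intros hi.
    apply (LTM_red_phase L V W K k0 T p G g HG Hg); [nra |].
    intros u hu. apply (not_green_in_red T p i u hT). lra.
Qed.
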